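(* Let $a\ge 2$ be an even integer. For every integer $n\ge 1$, the generalized Fermat number $F_n^{(a)}=a^{2^{n-1}}+1$ is primover to base $a$.
   Context: For an integer $a>1$ and an odd integer $n>1$ with $\gcd(a,n)=1$: $h_a(n)$ denotes the multiplicative order of $a$ modulo $n$. A cyclotomic coset of $a$ modulo $n$ is a set of the form $\{\, s a^j \bmod n : j\ge 0\,\}$ with $s\in\{1,\dots,n-1\}$; these cosets partition $\{1,\dots,n-1\}$, and $r_a(n)$ denotes the number of distinct cyclotomic cosets of $a$ modulo $n$. An odd composite number $n$ coprime to $a$ is called an overpseudoprime to base $a$ if $n=r_a(n)\,h_a(n)+1$. An integer $N>1$ is called primover to base $a$ if it is either prime or an overpseudoprime to base $a$. *)

From mathcomp Require Import all_boot.
Set Implicit Arguments. Unset Strict Implicit. Unset Printing Implicit Defensive.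

(* h_a(n): multiplicative order of a modulo n, i.e. the least k >= 1 with
   a^k = 1 (mod n).  The search is over 1 <= k < n; for gcd(a,n)=1 and n>1
   the order is <= totient n <= n-1, so this is exactly the order
   (the value 0 is returned only when no such k exists, which cannot happen
   under the coprimality hypothesis). *)
Definition mult_order (a n : nat) : nat :=
  nth 0 [seq k <- iota 1 n | a ^ k == 1 %[mod n]] 0.

(* Ranging j over 0 <= j < n is no restriction: the sequence (s a^j mod n)_j
   takes at most n values, and all of them already occur among its first n
   terms (preperiod + period <= n). *)
Definition cyc_coset (a n s : nat) : {set 'I_n} :=
  [set x : 'I_n | [exists j : 'I_n, val x == (s * a ^ j) %% n]].

Definition num_cosets (a n : nat) : nat :=
  #|[set cyc_coset a n (val s) | s : 'I_n & 0 < val s]|.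

Definition overpseudoprime (a n : nat) : bool :=
  [&& odd n, 1 < n, ~~ prime n, coprime a n &
      n == num_cosets a n * mult_order a n + 1].

Definition primover (a N : nat) : bool :=
  (1 < N) && (prime N || overpseudoprime a N).

From mathcomp Require Import all_boot.

(* Let N = a^(2^(n-1)) + 1 with a even and h = 2^n.  The whole proof rests on
   one arithmetic fact: a^h = 1 (mod N), and for EVERY divisor d > 2 of N the
   multiplicative order of a modulo d is exactly h (if a^j = 1 (mod d) then
   2^n divides j, otherwise a^(2^(n-1)) = 1 and d would divide 2).

   Since N is odd, every divisor d > 1 of N has this property.  We then show
   in general that when all divisors d > 1 of N see the same order h of a,
   the order of a modulo N is h and every cyclotomic coset {s a^j mod N}
   with 0 < s < N has exactly h elements: two equal elements s a^i = s a^j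
   force a^(j-i) = 1 modulo the divisor N / gcd(s, N) > 1.  The cosets
   partition {1, ..., N-1}, so N - 1 = r_a(N) h_a(N), i.e. N is prime or an
   overpseudoprime to base a. *)

Lemma expn_mod1_mull {a d k : nat} (c : nat) :
  a ^ k = 1 %[mod d] -> a ^ (k * c) = 1 %[mod d].
Proof. by move=> ak1; rewrite expnM -modnXm ak1 modnXm exp1n. Qed.

Lemma expn_mod1_dvd {a d k j : nat} :
  k %| j -> a ^ k = 1 %[mod d] -> a ^ j = 1 %[mod d].
Proof. by move=> /dvdnP[c ->] ak1; rewrite mulnC expn_mod1_mull. Qed.

Lemma expn_mod1_gcd {a d i j : nat} : 0 < i ->
  a ^ i = 1 %[mod d] -> a ^ j = 1 %[mod d] -> a ^ gcdn i j = 1 %[mod d].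
Proof.
move=> i_gt0 ai1 aj1; case: (egcdnP j i_gt0) => ki kj Bezout _.
have := expn_mod1_mull ki ai1.
by rewrite mulnC Bezout expnD -modnMml [kj * j]mulnC (expn_mod1_mull kj aj1) modnMml mul1n.
Qed.

Lemma sqr_mod1_of_dvd (x d : nat) : 0 < x -> d %| x + 1 -> x ^ 2 = 1 %[mod d].
Proof.
move=> x_gt0 dvd_d; apply/eqP; rewrite eqn_mod_dvd ?expn_gt0 ?x_gt0 //.
by rewrite -{2}(exp1n 2) subn_sqr dvdn_mull.
Qed.

Lemma fermat_period {a d k : nat} : 0 < a ->
  d %| a ^ (2 ^ k) + 1 -> a ^ (2 ^ k.+1) = 1 %[mod d].
Proof. by move=> a_gt0 dvd_d; rewrite expnSr expnM sqr_mod1_of_dvd ?expn_gt0 ?a_gt0. Qed.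

(* The order of a modulo any divisor d > 2 of a^(2^k) + 1 is 2^(k+1):
   the order divides 2^(k+1), and if it divided 2^k then d would divide 2. *)
Lemma fermat_order (a d k j : nat) : 0 < a -> 2 < d ->
  d %| a ^ (2 ^ k) + 1 -> a ^ j = 1 %[mod d] -> 2 ^ k.+1 %| j.
Proof.
move=> a_gt0 d_gt2 dvd_d aj1; have a2k1 := fermat_period a_gt0 dvd_d.
have [e le_e_k1 gcd_e] : exists2 e, e <= k.+1 & gcdn (2 ^ k.+1) j = 2 ^ e.
  by apply/dvdn_pfactor; rewrite ?dvdn_gcdl.
have /(expn_mod1_gcd _ a2k1) := aj1; rewrite expn_gt0 gcd_e => /(_ isT) a2e1.
suff /eqP e_k1 : e == k.+1 by rewrite -e_k1 -gcd_e dvdn_gcdr.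
rewrite eqn_leq le_e_k1 ltnNge; apply/negP => le_e_k.
have a2k : a ^ (2 ^ k) = 1 %[mod d] by apply: expn_mod1_dvd a2e1; rewrite dvdn_exp2l.
have : d %| 2 by move: dvd_d; rewrite /dvdn -modnDml a2k modnDml.
by move/dvdn_leq => /(_ isT); rewrite leqNgt d_gt2.
Qed.

Lemma expn_mod1_of_mul_eq {a N s i j : nat} : 0 < a -> 0 < N -> coprime a N ->
  i <= j -> s * a ^ i = s * a ^ j %[mod N] -> a ^ (j - i) = 1 %[mod N %/ gcdn s N].
Proof.
move=> a_gt0 N_gt0 coprime_aN le_ij.
set g := gcdn s N; set d := N %/ g.
have g_gt0 : 0 < g by rewrite gcdn_gt0 N_gt0 orbT.
have N_eq : N = d * g by rewrite divnK // dvdn_gcdr.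
have s_eq : s = s %/ g * g by rewrite divnK // dvdn_gcdl.
have coprime_ds : coprime d (s %/ g).
  by rewrite /coprime -(eqn_pmul2r g_gt0) mul1n muln_gcdl -N_eq -s_eq gcdnC.
have coprime_ad : coprime a d by apply: coprime_dvdr coprime_aN; rewrite N_eq dvdn_mulr.
move/esym/eqP; rewrite eqn_mod_dvd ?leq_mul2l ?leq_pexp2l ?le_ij ?orbT //.
rewrite -(subnKC le_ij) addKn expnD mulnA -[X in _ - X]muln1 -mulnBr.
rewrite {1}N_eq {1}s_eq -!mulnA mulnCA [g * _]mulnC dvdn_pmul2r //.
rewrite Gauss_dvdr // Gauss_dvdr; last by rewrite coprime_sym coprimeXl.
by rewrite -eqn_mod_dvd ?expn_gt0 ?a_gt0 // eq_sym => /eqP.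
Qed.

Lemma mult_orderP (a n k : nat) : 0 < k <= n -> a ^ k = 1 %[mod n] ->
  (forall j, 0 < j < k -> a ^ j != 1 %[mod n]) -> mult_order a n = k.
Proof.
move=> /andP[k_gt0 le_kn] ak1 minimal; rewrite /mult_order.
have n_eq : k.-1 + (n - k).+1 = n by rewrite addnS -addSn prednK // subnKC.
rewrite -[in iota 1 _]n_eq iotaD filter_cat add1n prednK //.
have -> : [seq j <- iota 1 k.-1 | a ^ j == 1 %[mod n]] = [::].
  apply/eqP; rewrite -[_ == _]negbK -has_filter; apply/hasPn => j.
  by rewrite mem_iota add1n prednK // => /minimal.
by rewrite /= ak1 eqxx.
Qed.

Section ClassPartition.
Variables (T : finType) (D : {set T}) (C : T -> {set T}).
Hypotheses (C_self : forall x, x \in D -> x \in C x)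
           (C_sub : forall x, x \in D -> C x \subset D)
           (C_eq : forall x y, x \in D -> y \in C x -> C y = C x).

Lemma classes_partition : partition [set C x | x in D] D.
Proof.
apply/and3P; split.
- apply/eqP/setP => y; apply/bigcupP/idP => [[_ /imsetP[x Dx ->]]|Dy].
    by apply/subsetP; apply: C_sub.
  by exists (C y); [apply: imset_f | apply: C_self].
- apply/trivIsetP => _ _ /imsetP[x Dx ->] /imsetP[y Dy ->] neq_xy.
  apply/pred0P => z /=; apply/negP => /andP[zx zy].
  by move: neq_xy; rewrite -(C_eq _ _ Dx zx) -(C_eq _ _ Dy zy) eqxx.
- by apply/imsetP => -[x Dx C_x0]; move: (C_self _ Dx); rewrite -C_x0 inE.
Qed.

Lemma card_classes (h : nat) : (forall x, x \in D -> #|C x| = h) ->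
  #|D| = #|[set C x | x in D]| * h.
Proof.
move=> C_card; rewrite (card_partition classes_partition) -sum_nat_const.
by apply: eq_bigr => _ /imsetP[x Dx ->]; apply: C_card.
Qed.

End ClassPartition.

Section UniformOrder.
Variables (a N h : nat).
Hypotheses (N_gt1 : 1 < N) (coprime_aN : coprime a N)
           (h_gt0 : 0 < h) (h_le_N : h <= N) (a_h : a ^ h = 1 %[mod N])
           (uniform : forall d j, d %| N -> 1 < d -> a ^ j = 1 %[mod d] -> h %| j).

Let N_gt0 : 0 < N. Proof. exact: ltnW. Qed.

Let a_gt0 : 0 < a.
Proof.
move: coprime_aN; rewrite lt0n; apply: contraTneq => ->.
by rewrite /coprime gcd0n neq_ltn N_gt1 orbT.
Qed.

Lemma uniform_mult_order : mult_order a N = h.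
Proof.
apply: mult_orderP; rewrite ?h_gt0 //= => j /andP[j_gt0 lt_jh].
by apply/negP => /eqP /(uniform _ _ (dvdnn N) N_gt1) /(dvdn_leq j_gt0); rewrite leqNgt lt_jh.
Qed.

Lemma coset_period (s j : nat) : s * a ^ j = s * a ^ (j %% h) %[mod N].
Proof.
rewrite {1}(divn_eq j h) expnD mulnCA -modnMml [_ * h]mulnC.
by rewrite (expn_mod1_mull _ a_h) modnMml mul1n.
Qed.

Let residue (x : nat) : 'I_N := Ordinal (ltn_pmod x N_gt0).

Lemma coset_orbit (s : nat) : cyc_coset a N s = [set residue (s * a ^ j) | j : 'I_h].
Proof.
apply/setP => x; rewrite inE; apply/existsP/imsetP => [[j /eqP x_eq]|[j _ ->]].
  by exists (Ordinal (ltn_pmod j h_gt0)) => //; apply: val_inj; rewrite /= x_eq coset_period.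
by exists (widen_ord h_le_N j).
Qed.

Lemma coset_self (x : 'I_N) : x \in cyc_coset a N x.
Proof. by rewrite inE; apply/existsP; exists (Ordinal N_gt0); rewrite /= muln1 modn_small. Qed.

Lemma coset_trans {s : nat} {x : 'I_N} :
  x \in cyc_coset a N s -> cyc_coset a N x \subset cyc_coset a N s.
Proof.
rewrite inE => /existsP[i /eqP x_eq]; apply/subsetP => y; rewrite inE => /existsP[j /eqP y_eq].
rewrite coset_orbit; apply/imsetP; exists (Ordinal (ltn_pmod (i + j) h_gt0)) => //.
by apply: val_inj; rewrite /= y_eq x_eq modnMml -mulnA -expnD coset_period.
Qed.

(* Since a is invertible modulo N, cosets of nonzero residues avoid 0. *)
Lemma coset_nonzero {s : nat} {x : 'I_N} : 0 < s < N -> x \in cyc_coset a N s -> 0 < x.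
Proof.
move=> /andP[s_gt0 lt_sN]; rewrite inE => /existsP[j /eqP ->]; rewrite lt0n.
apply/negP => /eqP /eqP; rewrite -/(N %| _) Gauss_dvdl ?coprimeXr 1?coprime_sym //.
by move=> /(dvdn_leq s_gt0); rewrite leqNgt lt_sN.
Qed.

Lemma coset_exponent_inj {s i j : nat} : 0 < s < N -> i < h -> j < h ->
  s * a ^ i = s * a ^ j %[mod N] -> i = j.
Proof.
move=> /andP[s_gt0 lt_sN]; wlog le_ij : i j / i <= j.
  move=> wlog_ij lt_ih lt_jh eq_ij; case: (leqP i j) => [le | /ltnW le].
    exact: wlog_ij.
  exact/esym/wlog_ij/esym.
move=> _ lt_jh /(expn_mod1_of_mul_eq a_gt0 N_gt0 coprime_aN le_ij).
set g := gcdn s N; have g_dvdN : g %| N by apply: dvdn_gcdr.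
have d_gt1 : 1 < N %/ g.
  rewrite ltnNge; apply/negP => d_le1.
  have : N <= g by rewrite -{1}(divnK g_dvdN) -[leqRHS]mul1n leq_mul2r d_le1 orbT.
  by rewrite leqNgt (leq_ltn_trans (dvdn_leq s_gt0 (dvdn_gcdl s N)) lt_sN).
move=> /(uniform _ _ (dvdn_div g_dvdN) d_gt1) h_dvd.
apply/eqP; rewrite eqn_leq le_ij -subn_eq0 eqn0Ngt; apply/negP => diff_gt0.
by move: (dvdn_leq diff_gt0 h_dvd); rewrite leqNgt (leq_ltn_trans (leq_subr i j) lt_jh).
Qed.

Lemma coset_card (s : nat) : 0 < s < N -> #|cyc_coset a N s| = h.
Proof.
move=> s_range; rewrite coset_orbit card_imset ?card_ord // => i j /(congr1 val) /= eq_ij.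
by apply: val_inj; apply: (coset_exponent_inj s_range (ltn_ord i) (ltn_ord j) eq_ij).
Qed.

Lemma uniform_num_cosets : N = num_cosets a N * h + 1.
Proof.
pose D := [set x : 'I_N | 0 < val x]; pose C (x : 'I_N) := cyc_coset a N x.
have D_range (x : 'I_N) : x \in D -> 0 < x < N by rewrite inE ltn_ord andbT.
have card_D : #|D| = N.-1.
  have -> : D = [set~ Ordinal N_gt0] by apply/setP => x; rewrite !inE -val_eqE lt0n.
  by rewrite cardsC1 card_ord.
have C_sub x : x \in D -> C x \subset D.
  by move=> /D_range x_range; apply/subsetP => y /(coset_nonzero x_range); rewrite inE.
have C_eq x y : x \in D -> y \in C x -> C y = C x.
  move=> /D_range x_range yx; apply/eqP; rewrite eqEcard coset_trans //=.
  by rewrite !coset_card // (coset_nonzero x_range yx) ltn_ord.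
have C_card x : x \in D -> #|C x| = h by move=> /D_range; apply: coset_card.
have -> : num_cosets a N = #|[set C x | x in D]| by [].
have := card_classes _ _ _ (fun x _ => coset_self x) C_sub C_eq _ C_card.
by rewrite card_D addn1 => <-; rewrite prednK.
Qed.

Lemma uniform_primover : odd N -> primover a N.
Proof.
move=> odd_N; rewrite /primover N_gt1; case: (boolP (prime N)) => //= composite_N.
rewrite /overpseudoprime odd_N N_gt1 composite_N coprime_aN uniform_mult_order /=.
exact/eqP/uniform_num_cosets.
Qed.

End UniformOrder.

Lemma fermat_odd (a k : nat) : ~~ odd a -> odd (a ^ (2 ^ k) + 1).
Proof. by move=> even_a; rewrite addn1 /= oddX (negbTE even_a) orbF -lt0n expn_gt0. Qed.

Lemma coprime_fermat (a k : nat) : coprime a (a ^ (2 ^ k) + 1).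
Proof.
rewrite -(prednK (expn_gt0 2 k)) expnS -coprime_modr mulnC modnMDl.
by rewrite coprime_modr coprimen1.
Qed.

Lemma fermat_exponent_le (a k : nat) : 1 < a -> 2 ^ k.+1 <= a ^ (2 ^ k) + 1.
Proof.
move=> a_gt1; apply: leq_trans (leq_addr 1 _).
apply: (@leq_trans (2 ^ 2 ^ k)); first by rewrite leq_exp2l // ltn_expl.
by rewrite leq_exp2r // expn_gt0.
Qed.

(* The Fermat number N = a^(2^(n-1)) + 1 is odd and all its divisors d > 1,
   being odd and hence > 2, see the order h = 2^n of a. *)
Theorem theorem5 (a n : nat) (ha : 2 <= a) (heven : ~~ odd a) (hn : 1 <= n) :
  primover a (a ^ (2 ^ n.-1) + 1).
Proof.
have a_gt0 : 0 < a := ltnW ha.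
have h_eq : 2 ^ n = 2 ^ n.-1.+1 by rewrite prednK.
have odd_N := fermat_odd a n.-1 heven.
apply: (uniform_primover _ _ (2 ^ n)) (odd_N).
- by rewrite addn1 ltnS expn_gt0 a_gt0.
- exact: coprime_fermat.
- exact: expn_gt0.
- by rewrite h_eq fermat_exponent_le.
- by rewrite h_eq (fermat_period a_gt0 (dvdnn _)).
move=> d j dvd_d d_gt1; have odd_d := dvdn_odd dvd_d odd_N.
rewrite h_eq; apply: fermat_order a_gt0 _ dvd_d.
by rewrite ltn_neqAle d_gt1 andbT; apply: contraTneq odd_d => <-.
Qed.
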